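(* Let $D$ be a division ring which is finite dimensional over its central subfield $K=Z(D)$, let ${}_DM$ be a finite dimensional left vector space over $D$ and let $\varphi:M\to M$ be a nilpotent $D$-linear map. Then $C_\varphi=\{\psi\in\mathrm{Hom}_D(M,M)\mid\psi\circ\varphi=\varphi\circ\psi\}$ is a $K$-subspace of $\mathrm{Hom}_D(M,M)$ and \[\dim_K(C_\varphi)\le\dim_K(D)\cdot\dim_D(\ker(\varphi))\cdot\dim_D(M).\] *)

From HB Require Import structures.
From mathcomp Require Import all_boot all_order all_algebra.
Set Implicit Arguments. Unset Strict Implicit. Unset Printing Implicit Defensive.
Import GRing.Theory.
Local Open Scope ring_scope.

Definition division_ring (D : unitRingType) : Prop :=
  forall x : D, x != 0 -> x \is a GRing.unit.

Definition central (D : pzRingType) (k : D) : Prop :=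
  forall x : D, k * x = x * k.

(* Linear independence of a finite family s of vectors of a left R-module V,
   with coefficients restricted to the scalars satisfying S
   (S = everything: independence over R; S = central: over the center). *)
Definition lin_indep (R : pzRingType) (V : lmodType R) (S : R -> Prop)
    (s : seq V) : Prop :=
  forall c : seq R, size c = size s -> (forall i, (i < size s)%N -> S c`_i) ->
    \sum_(i < size s) c`_i *: s`_i = 0 ->
    forall i, (i < size s)%N -> c`_i = 0.

Definition has_dim (R : pzRingType) (V : lmodType R) (S : R -> Prop)
    (X : V -> Prop) (d : nat) : Prop :=
  (exists s : seq V, size s = d /\ (forall v, v \in s -> X v) /\ lin_indep S s) /\
  (forall s : seq V, (forall v, v \in s -> X v) -> lin_indep S s -> (size s <= d)%N).

Definition lin_indep_fun (R : pzRingType) (M : lmodType R) (S : R -> Prop)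
    (s : seq (M -> M)) : Prop :=
  forall c : seq R, size c = size s -> (forall i, (i < size s)%N -> S c`_i) ->
    (forall v : M, \sum_(i < size s) c`_i *: (nth (fun _ => 0) s i) v = 0) ->
    forall i, (i < size s)%N -> c`_i = 0.

Definition has_dim_fun (R : pzRingType) (M : lmodType R) (S : R -> Prop)
    (X : (M -> M) -> Prop) (d : nat) : Prop :=
  (exists s : seq (M -> M), size s = d /\
      (forall i, (i < size s)%N -> X (nth (fun _ => 0) s i)) /\ lin_indep_fun S s) /\
  (forall s : seq (M -> M), (forall i, (i < size s)%N -> X (nth (fun _ => 0) s i)) ->
      lin_indep_fun S s -> (size s <= d)%N).

Definition Dlinear (R : pzRingType) (M : lmodType R) (f : M -> M) : Prop :=
  forall (a : R) (u v : M), f (a *: u + v) = a *: f u + f v.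

Definition nilpotent_map (R : pzRingType) (M : lmodType R) (f : M -> M) : Prop :=
  exists k : nat, forall v : M, iter k f v = 0.

Definition centralizer_map (R : pzRingType) (M : lmodType R) (phi : M -> M)
    (psi : M -> M) : Prop :=
  Dlinear psi /\ (forall v, psi (phi v) = phi (psi v)).

(* Fix a basis u of ker phi, extend it to a basis B = u ++ t of M, and take a K-basis b of D.
   To psi in C_phi attach the K-coordinates of the u-coordinates of the vectors psi(B_q):
   dim_K D * dim ker phi * dim M elements of K, depending K-linearly on psi.  If they all
   vanish for a K-combination Psi of elements of C_phi, then Psi maps M into span t, which
   meets ker phi only in 0; since Psi commutes with the nilpotent phi, Psi = 0.  Hence
   K-independent families in C_phi give K-independent rows of that length, and Gaussian
   elimination over the division ring K bounds their number. *)

From HB Require Import structures.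
From mathcomp Require Import all_boot all_order all_algebra.
From Stdlib Require Import Classical IndefiniteDescription.
Set Implicit Arguments. Unset Strict Implicit. Unset Printing Implicit Defensive.
Import GRing.Theory.
Local Open Scope ring_scope.

Lemma bounded_nat_pred_max (P : nat -> Prop) n :
  P 0%N -> (forall k, P k -> (k <= n)%N) -> exists k, P k /\ forall k', P k' -> (k' <= k)%N.
Proof.
move=> P0 Pn; apply: NNPP => nomax.
suff [k /Pn] : exists2 k, P k & (n.+1 <= k)%N by rewrite leqNgt => /negP.
elim: n.+1 => [|m [k Pk lemk]]; first by exists 0%N.
apply: NNPP => none; apply: nomax; exists k; split => // k' Pk'.
rewrite leqNgt; apply/negP => ltkk'; apply: none; exists k' => //.
exact: leq_ltn_trans lemk ltkk'.
Qed.

(* Instantiated both with all of [D] and with its centre, so that independence over [D]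
   and over [K] are handled by the same lemmas. *)
Record division_subring (D : unitRingType) (S : D -> Prop) : Prop := DivisionSubring {
  dsr0 : S 0;
  dsr1 : S 1;
  dsrB : forall x y, S x -> S y -> S (x - y);
  dsrM : forall x y, S x -> S y -> S (x * y);
  dsrV : forall x, S x -> x != 0 -> x \is a GRing.unit /\ S x^-1 }.

Lemma central_division_subring (D : unitRingType) :
  division_ring D -> division_subring (@central D).
Proof.
move=> hD; split.
- by move=> x; rewrite mul0r mulr0.
- by move=> x; rewrite mul1r mulr1.
- by move=> x y cx cy z; rewrite mulrBl mulrBr cx cy.
- by move=> x y cx cy z; rewrite -mulrA cy mulrA cx mulrA.
move=> x cx x0; have xU := hD x x0; split=> // z.
by rewrite -{1}[z](mulrK xU) -cx -!mulrA mulKr.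
Qed.

Lemma full_division_subring (D : unitRingType) :
  division_ring D -> division_subring (fun _ : D => True).
Proof. by move=> hD; split=> // x _ x0; split=> //; apply: hD. Qed.

Section DivisionSubring.
Variables (D : unitRingType) (S : D -> Prop).
Hypothesis hS : division_subring S.

Lemma dsrN x : S x -> S (- x).
Proof. by move=> Sx; rewrite -sub0r; apply: (dsrB hS) (dsr0 hS) Sx. Qed.

Lemma dsrD x y : S x -> S y -> S (x + y).
Proof. by move=> Sx Sy; rewrite -[y]opprK; apply: (dsrB hS) Sx (dsrN Sy). Qed.

Lemma dsr_sum (I : Type) (r : seq I) (F : I -> D) :
  (forall i, S (F i)) -> S (\sum_(i <- r) F i).
Proof. by move=> SF; apply: (big_ind S (dsr0 hS) dsrD) => i _; apply: SF. Qed.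

Definition rows_indep s (J : Type) (a : 'I_s -> J -> D) : Prop :=
  forall c : 'I_s -> D, (forall i, S (c i)) -> (forall j, \sum_i c i * a i j = 0) ->
    forall i, c i = 0.

Lemma rows_indep_drop_zero_column s N (a : 'I_s -> 'I_N.+1 -> D) :
  (forall i, a i ord_max = 0) -> rows_indep a ->
  rows_indep (fun i j => a i (lift ord_max j)).
Proof.
move=> a0 indep c Sc csum; apply: indep => // j.
case: (unliftP ord_max j) => [j'|] ->; first exact: csum.
by apply: big1 => i _; rewrite a0 mulr0.
Qed.

(* One step of Gaussian elimination: clear the last column using the pivot row [i0]. *)
Lemma rows_indep_eliminate s N (a : 'I_s.+1 -> 'I_N.+1 -> D) (i0 : 'I_s.+1) :
  let p := a i0 ord_max in
  (forall i j, S (a i j)) -> p != 0 -> rows_indep a ->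
  rows_indep (fun k j => a (lift i0 k) (lift ord_max j)
                         - a (lift i0 k) ord_max * p^-1 * a i0 (lift ord_max j)).
Proof.
move=> p Sa p0 indep c' Sc' csum.
have [pU Sp'] := dsrV hS (Sa i0 ord_max) p0.
pose c i := if unlift i0 i is Some k then c' k
            else - \sum_k c' k * a (lift i0 k) ord_max * p^-1.
have c_lift k : c (lift i0 k) = c' k by rewrite /c liftK.
have c_i0 : c i0 = - \sum_k c' k * a (lift i0 k) ord_max * p^-1 by rewrite /c unlift_none.
have Sc i : S (c i).
  rewrite /c; case: (unlift i0 i) => [k|]; first exact: Sc'.
  by apply/dsrN/dsr_sum => k; do 2 apply: (dsrM hS) => //.
have sum_i0 j : \sum_i c i * a i j
    = \sum_k c' k * (a (lift i0 k) j - a (lift i0 k) ord_max * p^-1 * a i0 j).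
  rewrite (bigD1_ord i0) //= c_i0 mulNr mulr_suml -sumrN addrC -big_split /=.
  by apply: eq_bigr => k _; rewrite c_lift mulrBr !mulrA addrC.
move=> k; rewrite -c_lift; apply: indep => // j; rewrite sum_i0.
case: (unliftP ord_max j) => [j'|] ->; first exact: csum.
by apply: big1 => k1 _; rewrite mulrVK // subrr mulr0.
Qed.

Lemma leq_rows_indep s N (a : 'I_s -> 'I_N -> D) :
  (forall i j, S (a i j)) -> rows_indep a -> (s <= N)%N.
Proof.
elim: N s a => [|N IHN] [|s] a // Sa indep.
  have := indep (fun _ => 1) (fun _ => dsr1 hS) (fun j => False_ind _ (notF (ltn_ord j))) ord0.
  by move/eqP; rewrite oner_eq0.
have [i0 /= p0|/= col0] := pickP (fun i => a i ord_max != 0).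
  apply: IHN (rows_indep_eliminate Sa p0 indep) => k j.
  by apply: (dsrB hS) => //; do 2 apply: (dsrM hS) => //; case: (dsrV hS (Sa i0 ord_max) p0).
have a0 i : a i ord_max = 0 by apply/eqP; move/negbT: (col0 i); rewrite negbK.
apply: leq_trans (leqnSn N); apply: IHN (rows_indep_drop_zero_column a0 indep) => i j.
exact: Sa.
Qed.

Lemma leq_rows_indep_card s (J : finType) (a : 'I_s -> J -> D) :
  (forall i j, S (a i j)) -> rows_indep a -> (s <= #|J|)%N.
Proof.
move=> Sa indep; apply: (@leq_rows_indep _ _ (fun i j => a i (enum_val j))) => [i j|c Sc csum].
  exact: Sa.
by apply: indep => // j; rewrite -(enum_rankK j); apply: csum.
Qed.

End DivisionSubring.

Section Span.
Variables (D : unitRingType) (V : lmodType D) (S : D -> Prop).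
Hypothesis hS : division_subring S.

Definition lin_comb (s : seq V) (c : nat -> D) : V := \sum_(i < size s) c i *: s`_i.

Definition in_span (s : seq V) (x : V) : Prop :=
  exists c : nat -> D, (forall i, (i < size s)%N -> S (c i)) /\ x = lin_comb s c.

Lemma lin_indepP (s : seq V) :
  lin_indep S s <->
  forall c : nat -> D, (forall i, (i < size s)%N -> S (c i)) -> lin_comb s c = 0 ->
    forall i, (i < size s)%N -> c i = 0.
Proof.
split=> [indep c Sc c0 i lti|indep c size_c Sc c0].
  have size_c : size (mkseq c (size s)) = size s by rewrite size_mkseq.
  rewrite -(nth_mkseq 0 c lti); apply: indep => // [k ltk|].
    by rewrite nth_mkseq //; apply: Sc.
  by rewrite -[RHS]c0; apply: eq_bigr => k _; rewrite nth_mkseq.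
exact: indep (nth 0 c) Sc c0.
Qed.

Lemma lin_comb_rcons (s : seq V) x c :
  lin_comb (rcons s x) c = lin_comb s c + c (size s) *: x.
Proof.
rewrite /lin_comb size_rcons big_ord_recr /= nth_rcons ltnn eqxx.
by congr (_ + _); apply: eq_bigr => i _; rewrite nth_rcons ltn_ord.
Qed.

Lemma lin_comb_cat (u t : seq V) c :
  lin_comb (u ++ t) c = lin_comb u c + lin_comb t (fun r => c (size u + r)%N).
Proof.
rewrite /lin_comb size_cat big_split_ord /=; congr (_ + _); apply: eq_bigr => i _.
  by rewrite nth_cat ltn_ord.
by rewrite nth_cat ltnNge leq_addr /= addKn.
Qed.

Lemma in_span_rcons_of_dep (s : seq V) x :
  lin_indep S s -> ~ lin_indep S (rcons s x) -> in_span s x.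
Proof.
move=> /lin_indepP indep dep; apply: NNPP => nspan; apply/dep/lin_indepP => c.
rewrite size_rcons lin_comb_rcons => Sc.
have [cx0|cx_neq0] := eqVneq (c (size s)) 0.
  rewrite cx0 scale0r addr0 => c0 i; rewrite ltnS leq_eqVlt => /predU1P[->//|lti].
  by apply: indep c0 i lti => k ltk; apply/Sc/ltnW.
have [cxU Scx'] := dsrV hS (Sc _ (ltnSn _)) cx_neq0.
move/eqP; rewrite addrC addr_eq0 => /eqP cx_eq; case: nspan.
exists (fun i => - ((c (size s))^-1 * c i)); split.
  by move=> i lti; apply/(dsrN hS)/(dsrM hS) => //; apply/Sc/ltnW.
rewrite -[x]scale1r -(mulVr cxU) -scalerA cx_eq scalerN scaler_sumr -sumrN.
by apply: eq_bigr => i _; rewrite scalerA scaleNr.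
Qed.

Lemma eq_lin_comb (s : seq V) c c' :
  (forall i, (i < size s)%N -> c i = c' i) -> lin_comb s c = lin_comb s c'.
Proof. by move=> cc'; apply: eq_bigr => i _; rewrite cc'. Qed.

Lemma in_span_choice (A : Type) (s : seq V) (F : A -> V) :
  (forall a, in_span s (F a)) ->
  exists c : A -> nat -> D,
    forall a, (forall i, (i < size s)%N -> S (c a i)) /\ F a = lin_comb s (c a).
Proof. exact: functional_choice. Qed.

Lemma sum_scale_lin_comb n (s : seq V) (a : 'I_n -> D) (e : 'I_n -> nat -> D) :
  \sum_i a i *: lin_comb s (e i) = lin_comb s (fun p => \sum_i a i * e i p).
Proof.
rewrite /lin_comb; under eq_bigr do rewrite scaler_sumr.
rewrite exchange_big /=; apply: eq_bigr => p _; rewrite scaler_suml.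
by apply: eq_bigr => i _; rewrite scalerA.
Qed.

Lemma in_span0 (s : seq V) : in_span s 0.
Proof.
exists (fun _ => 0); split=> [i _|]; first exact: dsr0 hS.
by rewrite /lin_comb big1 // => i _; rewrite scale0r.
Qed.

Lemma in_spanD (s : seq V) x y : in_span s x -> in_span s y -> in_span s (x + y).
Proof.
move=> [cx [Scx ->]] [cy [Scy ->]]; exists (fun i => cx i + cy i); split.
  by move=> i lti; apply: (dsrD hS); [apply: Scx | apply: Scy].
by rewrite /lin_comb -big_split; apply: eq_bigr => i _; rewrite scalerDl.
Qed.

Lemma in_spanZ (s : seq V) a x : S a -> in_span s x -> in_span s (a *: x).
Proof.
move=> Sa [c [Sc ->]]; exists (fun i => a * c i); split.
  by move=> i lti; apply: (dsrM hS) Sa (Sc i lti).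
by rewrite /lin_comb scaler_sumr; apply: eq_bigr => i _; rewrite scalerA.
Qed.

Lemma in_span_cat_disjoint (u t : seq V) y :
  lin_indep S (u ++ t) -> in_span u y -> in_span t y -> y = 0.
Proof.
move=> /lin_indepP indep [cu [Scu ->]] [ct [Sct yt]].
pose d p := if (p < size u)%N then cu p else - ct (p - size u)%N.
have d0 p : (p < size (u ++ t))%N -> d p = 0.
  apply: indep => [k|]; rewrite ?size_cat /d.
    case: (ltnP k (size u)) => [ltk _|lek ltk]; first exact: Scu.
    by apply/(dsrN hS)/Sct; rewrite ltn_subLR.
  rewrite lin_comb_cat (eq_lin_comb (c' := cu)) => [|k ltk]; last by rewrite /d ltk.
  suff -> : lin_comb t (fun r => d (size u + r)%N) = - lin_comb t ct by rewrite -yt subrr.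
  rewrite /lin_comb -sumrN; apply: eq_bigr => r _.
  by rewrite /d ltnNge leq_addr addKn scaleNr.
rewrite /lin_comb big1 // => p _; have := d0 p; rewrite size_cat /d ltn_ord.
by move=> ->; [rewrite scale0r | apply: ltn_addr].
Qed.

Lemma has_dim_basis (X : V -> Prop) d :
  has_dim S X d -> exists s : seq V,
    [/\ size s = d, forall v, v \in s -> X v, lin_indep S s & forall x, X x -> in_span s x].
Proof.
move=> [[s [size_s [sX indep]]] dim_le]; exists s; split=> // x Xx.
apply: in_span_rcons_of_dep indep _ => indep_x.
suff : (size (rcons s x) <= d)%N by rewrite size_rcons size_s ltnn.
by apply: dim_le indep_x => v; rewrite mem_rcons inE => /predU1P[->|/sX].
Qed.

Lemma extend_to_basis n (u : seq V) :
  (forall s : seq V, lin_indep S s -> (size s <= n)%N) -> lin_indep S u ->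
  exists t : seq V, lin_indep S (u ++ t) /\ forall x, in_span (u ++ t) x.
Proof.
move=> dim_le indep_u.
pose P k := exists t : seq V, size t = k /\ lin_indep S (u ++ t).
have [k [[t [size_t indep]] maxk]] : exists k, P k /\ forall k', P k' -> (k' <= k)%N.
  apply: (bounded_nat_pred_max (n := n)); first by exists [::]; rewrite cats0.
  by move=> k [t [<- /dim_le]]; rewrite size_cat; apply: leq_trans (leq_addl _ _).
exists t; split=> // x; apply: in_span_rcons_of_dep indep _ => indep_x.
have /maxk : P k.+1 by exists (rcons t x); rewrite size_rcons size_t -rcons_cat.
by rewrite ltnn.
Qed.

End Span.

Section LinearMaps.
Variables (D : unitRingType) (M : lmodType D) (f : M -> M).
Hypothesis f_lin : Dlinear f.

Lemma Dlinear0 : f 0 = 0.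
Proof.
have := f_lin 1 0 0; rewrite !scale1r addr0 => f00.
by apply: (addrI (f 0)); rewrite addr0 -f00.
Qed.

Lemma DlinearD u v : f (u + v) = f u + f v.
Proof. by have := f_lin 1 u v; rewrite !scale1r. Qed.

Lemma DlinearZ a u : f (a *: u) = a *: f u.
Proof. by rewrite -[a *: u]addr0 f_lin Dlinear0 addr0. Qed.

Lemma Dlinear_sum (I : Type) (r : seq I) (F : I -> M) :
  f (\sum_(i <- r) F i) = \sum_(i <- r) f (F i).
Proof.
elim: r => [|x r IHr]; first by rewrite !big_nil Dlinear0.
by rewrite !big_cons DlinearD IHr.
Qed.

Lemma Dlinear_lin_comb (s : seq M) c :
  f (lin_comb s c) = \sum_(i < size s) c i *: f s`_i.
Proof. by rewrite Dlinear_sum; apply: eq_bigr => i _; rewrite DlinearZ. Qed.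

End LinearMaps.

Section Centralizer.
Variables (D : unitRingType) (M : lmodType D) (phi : M -> M).

Lemma eq_centralizer (f g : M -> M) :
  f =1 g -> centralizer_map phi f -> centralizer_map phi g.
Proof. by move=> fg [f_lin f_phi]; split=> [a u v|v]; rewrite -!fg. Qed.

Hypothesis phi_lin : Dlinear phi.

Lemma centralizer0 : centralizer_map phi (fun _ => 0).
Proof. by split=> [a u v|v]; rewrite ?scaler0 ?addr0 ?Dlinear0. Qed.

Lemma centralizerD (f g : M -> M) : centralizer_map phi f -> centralizer_map phi g ->
  centralizer_map phi (fun v => f v + g v).
Proof.
move=> [f_lin f_phi] [g_lin g_phi]; split=> [a u v|v].
  by rewrite f_lin g_lin scalerDr addrACA.
by rewrite f_phi g_phi DlinearD.
Qed.

Lemma centralizerZ (k : D) (f : M -> M) : central k -> centralizer_map phi f ->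
  centralizer_map phi (fun v => k *: f v).
Proof.
move=> ck [f_lin f_phi]; split=> [a u v|v].
  by rewrite f_lin scalerDr !scalerA ck.
by rewrite f_phi DlinearZ.
Qed.

Lemma centralizer_sum (I : Type) (r : seq I) (c : I -> D) (F : I -> M -> M) :
  (forall i, central (c i)) -> (forall i, centralizer_map phi (F i)) ->
  centralizer_map phi (fun v => \sum_(i <- r) c i *: F i v).
Proof.
move=> cc cF; elim: r => [|i r IHr].
  by apply: eq_centralizer centralizer0 => v; rewrite big_nil.
apply: eq_centralizer (centralizerD (centralizerZ (cc i) (cF i)) IHr) => v.
by rewrite big_cons.
Qed.

End Centralizer.

(* Each [phi^j (Psi v) = Psi (phi^j v)] lies in [Z]; descending from [phi^k = 0], each
   of them is in [ker phi], hence zero. *)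
Lemma commute_nilpotent_eq0 (R : pzRingType) (V : lmodType R) (phi Psi : V -> V)
    (Z : V -> Prop) :
  nilpotent_map phi -> (forall v, Psi (phi v) = phi (Psi v)) ->
  (forall y, Z y -> phi y = 0 -> y = 0) -> (forall v, Z (Psi v)) ->
  forall v, Psi v = 0.
Proof.
move=> [k phik] commute Z_ker ZPsi v.
have iter_commute j w : iter j phi (Psi w) = Psi (iter j phi w).
  by elim: j => //= j ->; rewrite commute.
suff eq0 j : (j <= k)%N -> iter (k - j) phi (Psi v) = 0.
  by have := eq0 k (leqnn k); rewrite subnn.
elim: j => [_|j IHj ltjk]; first by rewrite subn0.
rewrite iter_commute; apply: Z_ker => //.
by rewrite -iter_commute -iterS subnSK //; apply: IHj; apply: ltnW.
Qed.

Lemma lin_indep_funP (R : pzRingType) (M : lmodType R) (S : R -> Prop) (s : seq (M -> M)) :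
  lin_indep_fun S s ->
  forall c : 'I_(size s) -> R, (forall i, S (c i)) ->
    (forall v, \sum_i c i *: nth (fun _ => 0) s i v = 0) -> forall i, c i = 0.
Proof.
have nth_c (c : 'I_(size s) -> R) (i : 'I_(size s)) : (map c (enum 'I_(size s)))`_i = c i.
  by rewrite (nth_map i) ?size_enum_ord // nth_ord_enum.
move=> indep c Sc c0 i; rewrite -nth_c; apply: indep => //.
- by rewrite size_map size_enum_ord.
- by move=> k ltk; rewrite -[k]/(nat_of_ord (Ordinal ltk)) nth_c.
- by move=> v; rewrite -[RHS](c0 v); apply: eq_bigr => k _; rewrite nth_c.
Qed.

Lemma centralizer_eq0 (D : unitRingType) (M : lmodType D) (phi Psi : M -> M) (u t : seq M) :
  division_ring D -> nilpotent_map phi -> centralizer_map phi Psi ->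
  lin_indep (fun _ : D => True) (u ++ t) -> (forall x, in_span (fun _ => True) (u ++ t) x) ->
  (forall y, phi y = 0 -> in_span (fun _ => True) u y) ->
  (forall q, (q < size (u ++ t))%N -> in_span (fun _ => True) t (Psi (u ++ t)`_q)) ->
  forall v, Psi v = 0.
Proof.
move=> hD nil [Psi_lin Psi_phi] indep span ker_u Psi_t.
have hT := full_division_subring hD.
apply: (commute_nilpotent_eq0 (Z := in_span (fun _ => True) t)) nil Psi_phi _ _.
  by move=> y yt /ker_u yu; apply: (in_span_cat_disjoint hT) indep yu yt.
move=> v; have [x [_ ->]] := span v; rewrite Dlinear_lin_comb //.
apply: (big_ind (in_span _ t) (in_span0 hT t) (@in_spanD _ _ _ hT t)) => q _.
by apply: (in_spanZ hT) => //; apply: Psi_t.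
Qed.

Lemma centralizer_indep_size_le (D : unitRingType) (M : lmodType D) (phi : M -> M)
    (b : seq D^o) (u t : seq M) (s : seq (M -> M)) :
  division_ring D -> Dlinear phi -> nilpotent_map phi ->
  (forall x : D^o, in_span (@central D) b x) ->
  lin_indep (fun _ => True) (u ++ t) -> (forall x, in_span (fun _ => True) (u ++ t) x) ->
  (forall y, phi y = 0 -> in_span (fun _ => True) u y) ->
  (forall i, (i < size s)%N -> centralizer_map phi (nth (fun _ => 0) s i)) ->
  lin_indep_fun (@central D) s ->
  (size s <= size u * size (u ++ t) * size b)%N.
Proof.
move=> hD phi_lin nil b_span indep span ker_u sC s_indep.
set B := u ++ t; pose psi i := nth (fun _ : M => 0) s i.
have [cm cm_spec] := in_span_choice (F := fun iq : nat * nat => psi iq.1 B`_iq.2) (fun _ => span _).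
have [cd cd_spec] := in_span_choice
  (F := fun iqp : nat * nat * nat => cm (iqp.1.1, iqp.1.2) iqp.2 : D^o) (fun _ => b_span _).
(* Row [i], column [(p, q, l)]: the [l]-th [K]-coordinate of the [p]-th coordinate of
   [psi_i (B_q)]; only the kernel coordinates [p < size u] are recorded. *)
pose J := ('I_(size u) * 'I_(size B) * 'I_(size b))%type.
have -> : (size u * size B * size b = #|{: J}|)%N by rewrite !card_prod !card_ord.
apply: (leq_rows_indep_card (central_division_subring hD)
  (a := fun (i : 'I_(size s)) (j : J) => cd (i : nat, j.1.2 : nat, j.1.1 : nat) j.2)).
  by move=> i [[p q] l]; apply: (cd_spec _).1.
move=> c cc csum.
pose Psi v := \sum_(i < size s) c i *: psi i v.
have Psi_C : centralizer_map phi Psi by apply: centralizer_sum => // i; apply: sC.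
have coord0 (q : 'I_(size B)) (p : 'I_(size u)) : \sum_i c i * cm (i : nat, q : nat) p = 0.
  under eq_bigr do rewrite (cd_spec (_, _, _)).2.
  apply: etrans (sum_scale_lin_comb b c (fun i => cd (i : nat, q : nat, p : nat))) _.
  by rewrite /lin_comb big1 // => l _; rewrite (csum (p, q, l)) scale0r.
have Psi_t q : (q < size B)%N -> in_span (fun _ => True) t (Psi B`_q).
  move=> ltq; exists (fun r => \sum_i c i * cm (i : nat, q) (size u + r)%N); split=> //.
  rewrite /Psi; under eq_bigr do rewrite (cm_spec (_, _)).2.
  rewrite sum_scale_lin_comb lin_comb_cat /lin_comb big1 ?add0r // => p _.
  by rewrite -[q]/(nat_of_ord (Ordinal ltq)) coord0 scale0r.
have Psi0 := centralizer_eq0 hD nil Psi_C indep span ker_u Psi_t.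
by apply: lin_indep_funP s_indep c cc Psi0.
Qed.

Lemma has_dim_fun_of_size_le (R : pzRingType) (M : lmodType R) (S : R -> Prop)
    (X : (M -> M) -> Prop) N :
  (forall s : seq (M -> M), (forall i, (i < size s)%N -> X (nth (fun _ => 0) s i)) ->
     lin_indep_fun S s -> (size s <= N)%N) ->
  exists d, has_dim_fun S X d /\ (d <= N)%N.
Proof.
move=> dim_le.
pose P k := exists s : seq (M -> M), size s = k /\
  (forall i, (i < size s)%N -> X (nth (fun _ => 0) s i)) /\ lin_indep_fun S s.
have [|k Pk|d [Pd maxd]] := @bounded_nat_pred_max P N.
- by exists [::]; split=> //; split=> // c _ _ _ i; rewrite ltn0.
- by case: Pk => s [<- [sX indep]]; apply: dim_le.
exists d; split; last by case: Pd => s [<- [sX indep]]; apply: dim_le.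
by split=> // s sX indep; apply: maxd; exists s.
Qed.

Theorem corollary4p7 (D : unitRingType) (M : lmodType D) (phi : M -> M)
    (dK kD n : nat) :
  division_ring D ->
  has_dim (@central D) (fun _ : D^o => True) dK ->
  has_dim (fun _ : D => True) (fun _ : M => True) n ->
  Dlinear phi -> nilpotent_map phi ->
  has_dim (fun _ : D => True) (fun v : M => phi v = 0) kD ->
  (centralizer_map phi (fun _ => 0)
   /\ (forall f g, centralizer_map phi f -> centralizer_map phi g ->
         centralizer_map phi (fun v => f v + g v))
   /\ (forall (k : D) f, central k -> centralizer_map phi f ->
         centralizer_map phi (fun v => k *: f v)))
  /\
  (exists c : nat, has_dim_fun (@central D) (centralizer_map phi) c
                   /\ (c <= dK * kD * n)%N).
Proof.
move=> hD dimK_D dim_M phi_lin nil dim_ker.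
have hK := central_division_subring hD; have hT := full_division_subring hD.
split.
  by split; [|split]; [apply: centralizer0 | apply: centralizerD | apply: centralizerZ].
have [b [size_b _ _ b_span]] := has_dim_basis hK dimK_D.
have [u [size_u _ u_indep ker_u]] := has_dim_basis hT dim_ker.
have dim_M_le (s : seq M) : lin_indep (fun _ => True) s -> (size s <= n)%N.
  by case: dim_M => _; apply => v.
have [t [B_indep B_span]] := extend_to_basis hT dim_M_le u_indep.
apply: has_dim_fun_of_size_le => s sC s_indep.
apply: leq_trans (centralizer_indep_size_le hD phi_lin nil (fun x => b_span x I)
  B_indep B_span ker_u sC s_indep) _.
by rewrite size_u size_b mulnAC (mulnC dK) leq_mul // dim_M_le.
Qed.
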